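(* Let $n\geq 3$ be an integer and let $\mathcal{E}_n$ be the Fomin–Kirillov algebra over an algebraically closed field $k$. Then $\mathcal{E}_n$ admits no truncated point modules of degree greater than $1$; that is, $\mathcal{P}_d(\mathcal{E}_n)=\emptyset$ for every $d\geq 2$.
   Context: The Fomin–Kirillov algebra $\mathcal{E}_n$ is the graded $k$-algebra generated by elements $x_{ij}$, $1\leq i<j\leq n$, all of degree $1$, subject to the relations: $x_{ij}^2=0$ for all $i<j$; $x_{ij}x_{kl}-x_{kl}x_{ij}=0$ for all $i<j$, $k<l$ with $\{i,j\}\cap\{k,l\}=\emptyset$; $x_{ij}x_{jk}-x_{jk}x_{ik}-x_{ik}x_{ij}=0$ and $x_{jk}x_{ij}-x_{ik}x_{jk}-x_{ij}x_{ik}=0$ for all $i<j<k$. For a connected graded $k$-algebra $A=k\oplus A_1\oplus A_2\oplus\cdots$ generated in degree $1$, a degree-$d$ (or $d$-truncated) point module is a graded cyclic left $A$-module $M=M_0\oplus\cdots\oplus M_d$ generated in degree $0$ with Hilbert series $1+t+\cdots+t^d$ (each $M_i$ one-dimensional). $\mathcal{P}_d(A)$ denotes the space of $d$-truncated point modules of $A$. *)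

From HB Require Import structures.
From mathcomp Require Import all_boot all_order all_algebra.
Set Implicit Arguments. Unset Strict Implicit. Unset Printing Implicit Defensive.
Import GRing.Theory.
Local Open Scope ring_scope.

(* A left module over the Fomin-Kirillov algebra E_n on the k-vector space V is
   given (universal property of the presentation) by endomorphisms
   x i j of V, for 0 <= i < j < n (generators x_{i+1,j+1}), satisfying the
   defining relations, where the product a*b acts as the composition a \o b.
   Only the values x i j with i < j are used. *)
Definition FK_relations (k : fieldType) (V : vectType k) (n : nat)
    (x : 'I_n -> 'I_n -> 'End(V)) : Prop :=
  [/\ (forall i j : 'I_n, (i < j)%N -> (x i j \o x i j)%VF = 0),
      (forall i j p q : 'I_n, (i < j)%N -> (p < q)%N ->
          [&& i != p, i != q, j != p & j != q] ->
          (x i j \o x p q)%VF - (x p q \o x i j)%VF = 0),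
      (forall i j l : 'I_n, (i < j)%N -> (j < l)%N ->
          (x i j \o x j l)%VF - (x j l \o x i l)%VF - (x i l \o x i j)%VF = 0)
    & (forall i j l : 'I_n, (i < j)%N -> (j < l)%N ->
          (x j l \o x i j)%VF - (x i l \o x j l)%VF - (x i j \o x i l)%VF = 0)].

Definition is_trunc_point_module (k : fieldType) (V : vectType k) (d : nat) (n : nat)
    (x : 'I_n -> 'I_n -> 'End(V)) (M : nat -> {vspace V}) : Prop :=
  [/\ FK_relations x,
      directv (\sum_(t < d.+1) M t)%VS /\ (\sum_(t < d.+1) M t)%VS = fullv,
      (forall t, (t <= d)%N -> \dim (M t) = 1%N) /\ (forall t, (d < t)%N -> M t = 0%VS),
      (forall (i j : 'I_n) t, (i < j)%N -> (x i j @: M t <= M t.+1)%VS)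
    & (forall U : {vspace V}, (M 0%N <= U)%VS ->
          (forall i j : 'I_n, (i < j)%N -> (x i j @: U <= U)%VS) -> U = fullv)].

From mathcomp Require Import all_boot all_order all_algebra ring.
Set Implicit Arguments. Unset Strict Implicit. Unset Printing Implicit Defensive.
Import GRing.Theory.
Local Open Scope ring_scope.

(* Write x_ij v0 = a_ij v1 and x_ij v1 = b_ij v2 for the spanning vectors of
   M_0, M_1, M_2.  Applying the defining relations to v0 gives bilinear
   equations in (a, b).  In each of them any two terms multiply, after
   rearranging the factors, to a multiple of some b_pq a_pq = 0; hence every
   term squares to zero, and all products b_ij a_pq vanish.  So a = 0 or b = 0,
   i.e. M_0 or M_0 + M_1 is a submodule, which generation by M_0 forbids as
   soon as dim V = d + 1 >= 3. *)

Lemma orthogonal_triple_eq0 (R : idomainType) (u v w : R) :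
  u - v - w = 0 -> u * v = 0 -> u * w = 0 -> v * w = 0 ->
  [/\ u = 0, v = 0 & w = 0].
Proof.
move=> uvw uv uw vw.
have sqr0 (z : R) : z * z = 0 -> z = 0 by move/eqP; rewrite mulf_eq0 orbb => /eqP.
have u_eq : u = v + w by apply/eqP; rewrite -subr_eq0 opprD addrA uvw.
have v_eq : v = u - w by rewrite u_eq addrK.
have w_eq : w = u - v by rewrite u_eq (addrC v) addrK.
split; apply: sqr0.
- by rewrite {2}u_eq mulrDr uv uw addr0.
- by rewrite {2}v_eq mulrBr mulrC uv vw subrr.
- by rewrite {2}w_eq mulrBr mulrC uw mulrC vw subrr.
Qed.

Lemma vline_scalars (K : fieldType) (vT : vectType K) (I : finType) (P : pred I)
    (u : I -> vT) (w : vT) :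
  (forall i, P i -> u i \in <[w]>%VS) -> exists c : I -> K, forall i, P i -> u i = c i *: w.
Proof.
move=> uw; apply: (@fin_all_exists _ (fun=> K) (fun i c => P i -> u i = c *: w)) => i.
case Pi: (P i); last by exists 0.
by have /vlineP[c ->] := uw i Pi; exists c.
Qed.

Lemma vpick_line (K : fieldType) (vT : vectType K) (U : {vspace vT}) :
  \dim U = 1%N -> U = <[vpick U]>%VS /\ vpick U != 0.
Proof.
move=> dimU; have nz : vpick U != 0.
  by rewrite vpick0; apply: contra_eqN dimU => /eqP->; rewrite dimv0.
split=> //; apply/eqP; rewrite eq_sym eqEdim -memvE memv_pick dim_vline nz dimU //.
Qed.

(* The defining relations of E_n with each monomial x_ij x_pq read as
   b_ij a_pq: the equations on the pairs (a, b) coming from 2-truncated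
   point modules. *)
Definition FK_point_relations (R : pzRingType) (n : nat) (a b : 'I_n -> 'I_n -> R) : Prop :=
  [/\ (forall i j : 'I_n, (i < j)%N -> b i j * a i j = 0),
      (forall i j p q : 'I_n, (i < j)%N -> (p < q)%N ->
          [&& i != p, i != q, j != p & j != q] ->
          b i j * a p q - b p q * a i j = 0),
      (forall i j l : 'I_n, (i < j)%N -> (j < l)%N ->
          b i j * a j l - b j l * a i l - b i l * a i j = 0)
    & (forall i j l : 'I_n, (i < j)%N -> (j < l)%N ->
          b j l * a i j - b i l * a j l - b i j * a i l = 0)].

Lemma FK_point_relations_of_action (K : fieldType) (vT : vectType K) (n : nat)
    (x : 'I_n -> 'I_n -> 'End(vT)) (v w u : vT) (a b : 'I_n -> 'I_n -> K) :
  FK_relations x -> u != 0 ->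
  (forall i j : 'I_n, (i < j)%N -> x i j v = a i j *: w) ->
  (forall i j : 'I_n, (i < j)%N -> x i j w = b i j *: u) ->
  FK_point_relations a b.
Proof.
case=> R1 R2 R3 R4 nz_u xv xw.
have scal0 c : c *: u = 0 -> c = 0.
  by move/eqP; rewrite scaler_eq0 (negPf nz_u) orbF => /eqP.
have xx (i j p q : 'I_n) : (i < j)%N -> (p < q)%N ->
    (x i j \o x p q)%VF v = (b i j * a p q) *: u.
  by move=> ij pq; rewrite comp_lfunE xv // linearZ /= xw // scalerA mulrC.
split.
- by move=> i j ij; apply: scal0; rewrite -xx // R1 // zero_lfunE.
- move=> i j p q ij pq disj; apply: scal0.
  by rewrite scalerBl -!xx // -opp_lfunE -add_lfunE R2 // zero_lfunE.
- move=> i j l ij jl; have il := ltn_trans ij jl; apply: scal0.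
  by rewrite !scalerBl -!xx // -!opp_lfunE -!add_lfunE R3 // zero_lfunE.
- move=> i j l ij jl; have il := ltn_trans ij jl; apply: scal0.
  by rewrite !scalerBl -!xx // -!opp_lfunE -!add_lfunE R4 // zero_lfunE.
Qed.

Section FKPointRelations.

Variables (R : idomainType) (n : nat) (a b : 'I_n -> 'I_n -> R).
Hypothesis FKab : FK_point_relations a b.

Lemma FK_point_triangle_ij_jl (i j l : 'I_n) : (i < j)%N -> (j < l)%N ->
  [/\ b i j * a j l = 0, b j l * a i l = 0 & b i l * a i j = 0].
Proof.
case: FKab => R1 _ R3 _ ij jl; have il := ltn_trans ij jl.
apply: orthogonal_triple_eq0; first exact: R3.
- by transitivity (b j l * a j l * (b i j * a i l)); [ring | rewrite R1 ?mul0r].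
- by transitivity (b i j * a i j * (b i l * a j l)); [ring | rewrite R1 ?mul0r].
- by transitivity (b i l * a i l * (b j l * a i j)); [ring | rewrite R1 ?mul0r].
Qed.

Lemma FK_point_triangle_jl_ij (i j l : 'I_n) : (i < j)%N -> (j < l)%N ->
  [/\ b j l * a i j = 0, b i l * a j l = 0 & b i j * a i l = 0].
Proof.
case: FKab => R1 _ _ R4 ij jl; have il := ltn_trans ij jl.
apply: orthogonal_triple_eq0; first exact: R4.
- by transitivity (b j l * a j l * (b i l * a i j)); [ring | rewrite R1 ?mul0r].
- by transitivity (b i j * a i j * (b j l * a i l)); [ring | rewrite R1 ?mul0r].
- by transitivity (b i l * a i l * (b i j * a j l)); [ring | rewrite R1 ?mul0r].
Qed.

Lemma FK_point_mul_eq0 (i j p q : 'I_n) : (i < j)%N -> (p < q)%N -> b i j * a p q = 0.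
Proof.
case: FKab => R1 R2 _ _ ij pq.
have [disj|] := boolP [&& i != p, i != q, j != p & j != q].
  have comm := etrans (subr0 _) (R2 i j p q ij pq disj).
  have prod0 : b i j * a p q * (b p q * a i j) = 0.
    by transitivity (b i j * a i j * (b p q * a p q)); [ring | rewrite R1 ?mul0r].
  by case: (orthogonal_triple_eq0 comm prod0 (mulr0 _) (mulr0 _)).
rewrite !negb_and !negbK => /or4P[/eqP e|/eqP e|/eqP e|/eqP e]; subst.
- case: (ltngtP j q) => [jq|qj|/val_inj <-]; last exact: R1.
  + by case: (FK_point_triangle_jl_ij ij jq).
  + by case: (FK_point_triangle_ij_jl pq qj).
- by case: (FK_point_triangle_jl_ij pq ij).
- by case: (FK_point_triangle_ij_jl ij pq).
- case: (ltngtP i p) => [ip|pi|/val_inj ->]; last exact: R1.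
  + by case: (FK_point_triangle_jl_ij ip pq).
  + by case: (FK_point_triangle_ij_jl pi ij).
Qed.

End FKPointRelations.

Section TruncatedPointModule.

Variables (k : fieldType) (V : vectType k) (n d : nat).
Variables (x : 'I_n -> 'I_n -> 'End(V)) (M : nat -> {vspace V}).
Hypothesis PM : is_trunc_point_module d x M.

Lemma dim_point_module : \dim (fullv : {vspace V}) = d.+1.
Proof.
case: PM => _ [/directvP /= dirM <-] [dim1 _] _ _.
rewrite dirM (eq_bigr (fun _ => 1%N)) ?sum1_card ?card_ord // => t _.
by rewrite dim1 // -ltnS.
Qed.

Lemma point_module_annihilated_degree (s : nat) :
  (forall i j : 'I_n, (i < j)%N -> (x i j @: M s)%VS = 0%VS) -> (d <= s)%N.
Proof.
case: PM => _ _ [dim1 dim0] xM gen annih.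
set U := (\sum_(t < s.+1) M t)%VS.
have U_full : U = fullv.
  apply: gen => [|i j ij]; first by rewrite /U big_ord_recl addvSl.
  rewrite limg_sum; apply/subv_sumP => t _.
  have := ltn_ord t; rewrite ltnS leq_eqVlt => /orP[/eqP->|lt_ts].
    by rewrite annih // sub0v.
  apply: subv_trans (xM i j t ij) _.
  exact: (sumv_sup (Ordinal (lt_ts : t.+1 < s.+1)%N)).
have dimM_le1 t : (\dim (M t) <= 1)%N.
  by case: (leqP t d) => [/dim1|/dim0] ->; rewrite ?dimv0.
suff : (d.+1 <= s.+1)%N by [].
rewrite -dim_point_module -U_full; apply: leq_trans (dimv_leq_sum _ _ _) _.
by rewrite -[s.+1 in X in (_ <= X)%N]card_ord -sum1_card leq_sum.
Qed.

Lemma point_module_scalars (s : nat) : (s < d)%N ->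
  exists2 c : 'I_n -> 'I_n -> k,
    forall i j : 'I_n, (i < j)%N -> x i j (vpick (M s)) = c i j *: vpick (M s.+1)
  & exists i j : 'I_n, (i < j)%N /\ c i j != 0.
Proof.
move=> lt_sd; case: PM => _ _ [dim1 _] xM _.
have [Ms _] := vpick_line (dim1 s (ltnW lt_sd)).
have [Ms1 _] := vpick_line (dim1 s.+1 lt_sd).
have [c xc] : exists c : 'I_n * 'I_n -> k, forall p : 'I_n * 'I_n, (p.1 < p.2)%N ->
    x p.1 p.2 (vpick (M s)) = c p *: vpick (M s.+1).
  apply: vline_scalars => -[i j] /= ij; rewrite -Ms1.
  by apply: subvP (xM i j s ij) _ _; rewrite memv_img ?memv_pick.
exists (fun i j => c (i, j)) => [i j ij|]; first exact: (xc (i, j)).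
have [/existsP[i /existsP[j /andP[ij nz]]]|/existsPn c0] :=
  boolP [exists i : 'I_n, exists j : 'I_n, (i < j)%N && (c (i, j) != 0)].
  by exists i, j.
suff : (d <= s)%N by rewrite leqNgt lt_sd.
apply: point_module_annihilated_degree => i j ij.
have /existsPn/(_ j) := c0 i; rewrite ij negbK => /eqP cij0.
rewrite Ms limg_line (xc (i, j)) //= cij0 scale0r.
by apply/eqP; rewrite -subv0 -memvE mem0v.
Qed.

End TruncatedPointModule.

Theorem theorem1p1 (k : closedFieldType) (n : nat) (hn : (3 <= n)%N)
    (d : nat) (hd : (2 <= d)%N)
    (V : vectType k) (x : 'I_n -> 'I_n -> 'End(V)) (M : nat -> {vspace V}) :
  ~ is_trunc_point_module d x M.
Proof.
move=> PM; have [FK _ [dim1 _] _ _] := PM.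
have [a xa [p [q [pq nz_a]]]] := point_module_scalars PM (ltnW hd).
have [b xb [i [j [ij nz_b]]]] := point_module_scalars PM hd.
have [_ nz_v2] := vpick_line (dim1 2%N hd).
have FKab := FK_point_relations_of_action FK nz_v2 xa xb.
by move: (FK_point_mul_eq0 FKab ij pq) => /eqP; rewrite mulf_eq0 (negPf nz_a) (negPf nz_b).
Qed.
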